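(* Let $n\ge3$. The functional $F_n:\mathcal A_n\to\mathbb R$ attains its maximum value at a point $[\mu]\in\mathcal A_n$ if and only if $\mu$ is isomorphic to the commutative associative algebra $\mu_{ca}$ defined on a basis $\{X_1,\dots,X_n\}$ by $\mu_{ca}(X_1,X_1)=X_2$ (all other products of basis vectors zero). In this case $F_n([\mu])=20$.
   Context: $V_n$ is the space of bilinear maps $\mu:\mathbb C^n\times\mathbb C^n\to\mathbb C^n$ with standard Hermitian structures; $\mathcal A_n\subset\mathbb PV_n$ is the projectivization of the algebraic set of associative $\mu\in V_n$. $L^\mu_XY=\mu(X,Y)$, $R^\mu_XY=\mu(Y,X)$, $\mathrm M_\mu=2\sum_i L^\mu_{X_i}(L^\mu_{X_i})^*-2\sum_i (L^\mu_{X_i})^*L^\mu_{X_i}-2\sum_i (R^\mu_{X_i})^*R^\mu_{X_i}$ ($\{X_i\}$ orthonormal), $\|\mu\|^2=\sum_{i,j}\|\mu(X_i,X_j)\|^2$, $F_n([\mu])=\operatorname{tr}\mathrm M_\mu^2/\|\mu\|^4$. Isomorphism of algebras means lying in the same $\mathrm{GL}(n)$-orbit under $g.\mu(X,Y)=g\mu(g^{-1}X,g^{-1}Y)$. *)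

From HB Require Import structures.
From mathcomp Require Import all_boot all_order all_algebra.
From mathcomp Require Import complex.
From mathcomp Require Import reals.
Set Implicit Arguments. Unset Strict Implicit. Unset Printing Implicit Defensive.
Import Order.TTheory GRing.Theory Num.Theory.
Local Open Scope ring_scope.

(* C^n is represented by column vectors 'cV[R[i]]_n, with standard basis
   X_i = delta_mx i 0 (orthonormal for the standard Hermitian product). *)

(* A bilinear map mu : C^n x C^n -> C^n is given by its structure constants:
   mu(X_i, X_j) = \sum_k bl mu i j k X_k. *)
Definition bilin (R : realType) (n : nat) := 'I_n -> 'I_n -> 'I_n -> R[i].

Definition basis_vec (R : realType) (n : nat) (i : 'I_n) : 'cV[R[i]]_n :=
  delta_mx i 0.

Definition bl_app (R : realType) (n : nat) (mu : bilin R n)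
  (x y : 'cV[R[i]]_n) : 'cV[R[i]]_n :=
  \col_k \sum_i \sum_j x i 0 * y j 0 * mu i j k.

Definition associative_bl (R : realType) (n : nat) (mu : bilin R n) : Prop :=
  forall x y z : 'cV[R[i]]_n,
    bl_app mu (bl_app mu x y) z = bl_app mu x (bl_app mu y z).

Definition adj (R : realType) (n : nat) (A : 'M[R[i]]_n) : 'M[R[i]]_n :=
  map_mx (@conjc R) A^T.

(* L_{X_i} Y = mu(X_i, Y), R_{X_i} Y = mu(Y, X_i) as matrices in the basis *)
Definition Lmx (R : realType) (n : nat) (mu : bilin R n) (i : 'I_n) : 'M[R[i]]_n :=
  \matrix_(k, j) mu i j k.
Definition Rmx (R : realType) (n : nat) (mu : bilin R n) (i : 'I_n) : 'M[R[i]]_n :=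
  \matrix_(k, j) mu j i k.

Definition Mmu (R : realType) (n : nat) (mu : bilin R n) : 'M[R[i]]_n :=
  2%:R *: (\sum_i Lmx mu i *m adj (Lmx mu i))
  - 2%:R *: (\sum_i adj (Lmx mu i) *m Lmx mu i)
  - 2%:R *: (\sum_i adj (Rmx mu i) *m Rmx mu i).

Definition sqmod (R : realType) (z : R[i]) : R := complex.Re z ^+ 2 + complex.Im z ^+ 2.

Definition bl_norm2 (R : realType) (n : nat) (mu : bilin R n) : R :=
  \sum_i \sum_j \sum_k sqmod (mu i j k).

(* F_n([mu]) = tr(M_mu^2) / ||mu||^4  (tr M_mu^2 is real since M_mu is
   Hermitian; we take its real part) *)
Definition Fn (R : realType) (n : nat) (mu : bilin R n) : R :=
  complex.Re (\tr (Mmu mu *m Mmu mu)) / (bl_norm2 mu ^+ 2).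

Definition gl_act (R : realType) (n : nat) (g : 'M[R[i]]_n) (mu : bilin R n)
  : bilin R n :=
  fun i j k => (g *m bl_app mu (invmx g *m basis_vec R i)
                                (invmx g *m basis_vec R j)) k 0.

Definition isomorphic_bl (R : realType) (n : nat) (mu nu : bilin R n) : Prop :=
  exists g : 'M[R[i]]_n, g \in unitmx /\ gl_act g mu = nu.

(* mu_ca(X_1, X_1) = X_2, all other products of basis vectors zero
   (X_1, X_2 are the basis vectors of index 0 and 1) *)
Definition mu_ca (R : realType) (n : nat) : bilin R n :=
  fun i j k => if [&& (i == 0%N :> nat), (j == 0%N :> nat) & (k == 1%N :> nat)]
               then 1 else 0.

Definition in_An (R : realType) (n : nat) (mu : bilin R n) : Prop :=
  associative_bl mu /\ exists i j k, mu i j k <> 0.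

Definition is_max_An (R : realType) (n : nat) (mu : bilin R n) : Prop :=
  forall nu : bilin R n, in_An nu -> Fn nu <= Fn mu.

From HB Require Import structures.
From mathcomp Require Import all_boot all_order all_algebra.
From mathcomp Require Import complex.
From mathcomp Require Import reals.
From mathcomp Require Import ring lra.
From Stdlib Require Import FunctionalExtensionality.
Import Order.TTheory GRing.Theory Num.Theory.
Set Implicit Arguments. Unset Strict Implicit. Unset Printing Implicit Defensive.
Local Open Scope complex_scope.
Local Open Scope ring_scope.

(* Write A (resp. D) for the Gram matrix of the vectors u_k = (mu_ij^k)_{i,j}
   (resp. of the conjugated vectors z_k collecting all mu_{ik}^m, mu_{ki}^m),
   so that M_mu = 2 (A - D).  Lagrange's identity turns tr A^2 and tr D^2 into
   ||mu||^4 and 4 ||mu||^4 minus nonnegative defects, and tr(A D) is a sum of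
   squares; hence tr M_mu^2 = 20 ||mu||^4 - Fdefect mu with Fdefect mu >= 0,
   i.e. F_n <= 20 on all nonzero bilinear maps, with equality iff
   Fdefect mu = 0.  In the equality case the vectors z_k are pairwise
   proportional and orthogonal to the u_k, which forces mu(x, y) = f(x) f(y) v
   with f(v) = 0.  Finally, such nonzero rank-one maps are exactly the maps
   isomorphic to mu_ca(x, y) = x_1 y_1 X_2: a transvection argument brings any
   pair (f, v) with f(v) = 0 to (X_1^*, X_2).  Since mu_ca lies in A_n, being
   maximal on A_n is the same as attaining the value 20. *)

Local Notation cj := conjc.

Section SumsOfSquares.
Variable R : realType.
Local Notation C := R[i].

Lemma sum_pair (I J : finType) (F : I * J -> C) :
  \sum_p F p = \sum_i \sum_j F (i, j).
Proof. by rewrite pair_bigA; apply: eq_bigr => -[]. Qed.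

Lemma normsq_eq0 (z : C) : z * cj z = 0 -> z = 0.
Proof. by move/eqP; rewrite mulf_eq0 conjc_eq0 orbb => /eqP. Qed.

Lemma psumr2_eq0 (I J : finType) (F : I -> J -> C) :
  (forall i j, 0 <= F i j) -> \sum_i \sum_j F i j = 0 -> forall i j, F i j = 0.
Proof.
move=> F_ge0 /psumr_eq0P sum0 i j.
have /psumr_eq0P row0 :=
  sum0 (fun i _ => sumr_ge0 _ (fun j _ => F_ge0 i j)) i isT.
exact: row0 (fun j _ => F_ge0 i j) j isT.
Qed.

Lemma sum_normsq_eq0 (I : finType) (x : I -> C) :
  \sum_i x i * cj (x i) = 0 -> forall i, x i = 0.
Proof.
by move=> /psumr_eq0P sum0 i; apply/normsq_eq0/sum0 => // j _; apply: mulcJ_ge0.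
Qed.

Definition lag_defect (I : finType) (x y : I -> C) : C :=
  \sum_p \sum_q (x p * y q - x q * y p) * cj (x p * y q - x q * y p).

Lemma lag_defect_ge0 (I : finType) (x y : I -> C) : 0 <= lag_defect x y.
Proof. by apply: sumr_ge0 => p _; apply: sumr_ge0 => q _; apply: mulcJ_ge0. Qed.

Lemma lagrange_identity (I : finType) (x y : I -> C) :
  lag_defect x y = 2 * ((\sum_p x p * cj (x p)) * (\sum_q y q * cj (y q))
                        - (\sum_p x p * cj (y p)) * (\sum_q cj (x q) * y q)).
Proof.
pose P p q := x p * cj (x p) * (y q * cj (y q)).
pose Q p q := x p * cj (y p) * (cj (x q) * y q).
have expand p q : (x p * y q - x q * y p) * cj (x p * y q - x q * y p)
    = (P p q + P q p) - (Q p q + Q q p).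
  by rewrite /P /Q !rmorphB !rmorphM /=; ring.
rewrite /lag_defect; under eq_bigr do under eq_bigr do rewrite expand.
under eq_bigr do rewrite sumrB !big_split /=.
rewrite sumrB !big_split /= [X in _ + X - _]exchange_big.
rewrite [X in _ - (_ + X)]exchange_big /= !big_distrlr /=.
by rewrite mulrBr -!mulr2n !mulr_natl.
Qed.

Definition lagsum (K Q : finType) (w : K -> Q -> C) : C :=
  \sum_k \sum_l lag_defect (w k) (w l).

Lemma lagsum_ge0 (K Q : finType) (w : K -> Q -> C) : 0 <= lagsum w.
Proof.
by apply: sumr_ge0 => k _; apply: sumr_ge0 => l _; apply: lag_defect_ge0.
Qed.

Lemma lagsum_eq0 (K Q : finType) (w : K -> Q -> C) : lagsum w = 0 ->
  forall k l q q', w k q * w l q' = w k q' * w l q.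
Proof.
move=> /(psumr2_eq0 (fun k l => lag_defect_ge0 (w k) (w l))) lag0 k l q q'.
apply/eqP; rewrite -subr_eq0; apply/eqP/normsq_eq0.
by apply: (psumr2_eq0 _ (lag0 k l)) => p p'; apply: mulcJ_ge0.
Qed.
Definition gram (Q : finType) (n : nat) (w : 'I_n -> Q -> C) : 'M[C]_n :=
  \matrix_(k, l) \sum_q w k q * cj (w l q).

Definition sqnorm (K Q : finType) (w : K -> Q -> C) : C :=
  \sum_k \sum_q w k q * cj (w k q).

(* tr(G^2) = sum_{k,l} |<w_k, w_l>|^2, which by Lagrange's identity equals
   (sum_k |w_k|^2)^2 up to a nonnegative defect. *)
Lemma trace_gram_sq (Q : finType) (n : nat) (w : 'I_n -> Q -> C) :
  2 * \tr (gram w *m gram w) = 2 * sqnorm w ^+ 2 - lagsum w.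
Proof.
rewrite /lagsum.
under [X in _ = _ - X]eq_bigr do under eq_bigr do rewrite lagrange_identity.
rewrite /sqnorm expr2 big_distrlr /=.
under [X in _ = _ - X]eq_bigr do rewrite -mulr_sumr.
rewrite -mulr_sumr -mulrBr; congr (_ * _).
rewrite /mxtrace -sumrB; apply: eq_bigr => k _; rewrite mxE -sumrB.
apply: eq_bigr => l _; rewrite !mxE opprB addrC subrK.
by congr (_ * _); apply: eq_bigr => q _; rewrite mulrC.
Qed.

Lemma trace_gram_cross (P Q : finType) (n : nat)
    (u : 'I_n -> P -> C) (z : 'I_n -> Q -> C) :
  \tr (gram u *m gram (fun k q => cj (z k q)))
  = \sum_p \sum_q (\sum_k u k p * z k q) * cj (\sum_k u k p * z k q).
Proof.
transitivity (\sum_k \sum_l \sum_p \sum_q (u k p * z k q) * cj (u l p * z l q)).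
  apply: eq_bigr => k _; rewrite mxE; apply: eq_bigr => l _.
  rewrite !mxE big_distrlr /=; apply: eq_bigr => p _; apply: eq_bigr => q _.
  by rewrite conjcK rmorphM /=; ring.
rewrite exchange_big /=.
under eq_bigr do rewrite exchange_big /=.
under eq_bigr do under eq_bigr do rewrite exchange_big /=.
rewrite exchange_big /=; apply: eq_bigr => p _.
rewrite exchange_big /=; apply: eq_bigr => q _.
by rewrite rmorph_sum big_distrlr /= exchange_big.
Qed.

Lemma trace_gram_cross_ge0 (P Q : finType) (n : nat)
    (u : 'I_n -> P -> C) (z : 'I_n -> Q -> C) :
  0 <= \tr (gram u *m gram (fun k q => cj (z k q))).
Proof.
by rewrite trace_gram_cross; apply: sumr_ge0 => p _; apply: sumr_ge0 => q _;
  apply: mulcJ_ge0.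
Qed.

End SumsOfSquares.

Section TraceIdentity.
Variables (R : realType) (n : nat).
Local Notation C := R[i].
Implicit Type mu : bilin R n.

(* prod_coord mu k collects the k-th coordinates of all products X_i X_j;
   factor_coord mu k collects the coordinates of all products in which X_k is
   a factor (on the right for [true], on the left for [false]). *)
Definition prod_coord mu (k : 'I_n) (p : 'I_n * 'I_n) : C := mu p.1 p.2 k.

Definition factor_coord mu (k : 'I_n) (q : bool * ('I_n * 'I_n)) : C :=
  if q.1 then mu q.2.1 k q.2.2 else mu k q.2.1 q.2.2.

Definition factor_coordJ mu k q : C := cj (factor_coord mu k q).

(* M_mu = 2 (A - D): the first sum in M_mu is the Gram matrix of the vectors
   prod_coord, the last two together are the Gram matrix of factor_coordJ. *)
Lemma Mmu_gram mu :
  Mmu mu = 2%:R *: (gram (prod_coord mu) - gram (factor_coordJ mu)).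
Proof.
apply/matrixP => k l; rewrite /Mmu !mxE !summxE.
rewrite (sum_pair (fun q : bool * _ => _)) big_bool /=.
rewrite mulrBr mulrDr opprD addrA /factor_coordJ /factor_coord /=.
congr (_ - _ - _); congr (_ * _); rewrite sum_pair; apply: eq_bigr => i _;
  rewrite !mxE; apply: eq_bigr => j _; rewrite !mxE ?conjcK //.
Qed.

Lemma sqmodE (z : C) : z * cj z = (sqmod z)%:C.
Proof.
case: z => a b; rewrite /sqmod /=.
by apply/eqP; rewrite eq_complex /=; apply/andP; split; apply/eqP; ring.
Qed.

Lemma bl_norm2E mu :
  (bl_norm2 mu)%:C = \sum_i \sum_j \sum_k mu i j k * cj (mu i j k).
Proof.
rewrite /bl_norm2 !rmorph_sum; apply: eq_bigr => i _; rewrite rmorph_sum.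
apply: eq_bigr => j _; rewrite rmorph_sum; apply: eq_bigr => k _.
by rewrite sqmodE.
Qed.

Lemma sqnorm_prod_coord mu : sqnorm (prod_coord mu) = (bl_norm2 mu)%:C.
Proof.
rewrite bl_norm2E /sqnorm exchange_big /= sum_pair.
by apply: eq_bigr => i _; apply: eq_bigr.
Qed.

(* Each product mu(X_i, X_j) is counted twice among the factor coordinates. *)
Lemma sqnorm_factor_coordJ mu : sqnorm (factor_coordJ mu) = 2 * (bl_norm2 mu)%:C.
Proof.
rewrite mulr2n mulrDl mul1r bl_norm2E /sqnorm.
under eq_bigr do rewrite (sum_pair (fun q : bool * _ => _)) big_bool /= !sum_pair.
rewrite big_split /=; congr (_ + _); last first.
  apply: eq_bigr => i _; apply: eq_bigr => j _; apply: eq_bigr => k _.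
  by rewrite /factor_coordJ /factor_coord /= conjcK mulrC.
rewrite exchange_big /=; apply: eq_bigr => i _; apply: eq_bigr => j _.
by apply: eq_bigr => k _; rewrite /factor_coordJ /factor_coord /= conjcK mulrC.
Qed.

(* The defect of F_n from its maximal value 20: a sum of three nonnegative
   terms, the Lagrange defects of both families and tr(A D). *)
Definition Fdefect mu : C :=
  2 * lagsum (prod_coord mu) + 2 * lagsum (factor_coordJ mu)
  + 8%:R * \tr (gram (prod_coord mu) *m gram (factor_coordJ mu)).

Lemma Fdefect_ge0 mu : 0 <= Fdefect mu.
Proof.
by rewrite /Fdefect !addr_ge0 ?mulr_ge0 ?ler0n ?lagsum_ge0 ?trace_gram_cross_ge0.
Qed.

Lemma trace_Mmu_sq mu :
  \tr (Mmu mu *m Mmu mu) = 20%:R * (bl_norm2 mu)%:C ^+ 2 - Fdefect mu.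
Proof.
rewrite Mmu_gram; set A := gram _; set D := gram _.
have -> : \tr ((2%:R *: (A - D)) *m (2%:R *: (A - D)))
    = 2 * (2 * \tr (A *m A)) + 2 * (2 * \tr (D *m D)) - 8%:R * \tr (A *m D).
  rewrite -scalemxAl -scalemxAr !mxtraceZ !mulmxBl !mulmxBr !raddfB /=.
  by rewrite (mxtrace_mulC D A); ring.
rewrite !trace_gram_sq sqnorm_prod_coord sqnorm_factor_coordJ.
by rewrite /Fdefect -/A -/D; ring.
Qed.
End TraceIdentity.

Section MaximalValue.
Variables (R : realType) (n : nat).
Local Notation C := R[i].
Implicit Type mu : bilin R n.

Lemma complex_ge0_real (x : C) : 0 <= x -> x = (complex.Re x)%:C.
Proof. by move=> /ger0_Im; case: x => a b /= ->. Qed.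

Lemma Fn_defect mu :
  Fn mu = (20%:R * bl_norm2 mu ^+ 2 - complex.Re (Fdefect mu)) / bl_norm2 mu ^+ 2.
Proof.
rewrite /Fn trace_Mmu_sq -rmorphXn -(rmorph_nat (real_complex R)) -rmorphM.
by case: (Fdefect mu).
Qed.

Lemma Fn_le20 mu : Fn mu <= 20%:R.
Proof.
rewrite Fn_defect; have [->|norm_neq0] := eqVneq (bl_norm2 mu) 0.
  by rewrite expr0n /= invr0 mulr0 ler0n.
rewrite ler_pdivrMr ?exprn_even_gt0 // lerBlDr lerDl.
by have := Fdefect_ge0 mu; rewrite lecE /= => /andP[].
Qed.

Lemma Fn_eq20 mu : bl_norm2 mu != 0 -> (Fn mu = 20%:R <-> Fdefect mu = 0).
Proof.
move=> norm_neq0; have norm2_neq0 : bl_norm2 mu ^+ 2 != 0 by rewrite expf_neq0.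
rewrite Fn_defect; split => [|->]; last by rewrite /= subr0 mulfK.
move=> /(congr1 (fun t => t * bl_norm2 mu ^+ 2)); rewrite divfK // => eq20.
rewrite (complex_ge0_real (Fdefect_ge0 mu)).
by have -> : complex.Re (Fdefect mu) = 0 by lra.
Qed.

Lemma bl_norm2_neq0 mu a b c : mu a b c != 0 -> bl_norm2 mu != 0.
Proof.
move=> mu_neq0; apply: contraNneq mu_neq0 => norm0; apply/eqP.
have /eqP := congr1 (real_complex R) norm0; rewrite bl_norm2E => /eqP sum0.
have := psumr2_eq0 _ sum0 a b; rewrite /= => /(_ _) /sum_normsq_eq0 -> //.
by move=> i j; apply: sumr_ge0 => k _; apply: mulcJ_ge0.
Qed.
End MaximalValue.

Section RankOne.
Variables (R : realType) (n : nat).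
Local Notation C := R[i].
Implicit Type mu : bilin R n.

(* The bilinear map (x, y) |-> f(x) f(y) v; when f(v) = 0 it squares to zero,
   and these are exactly the maps isomorphic to mu_ca. *)
Definition rank_one (f : 'rV[C]_n) (v : 'cV[C]_n) : bilin R n :=
  fun i j k => f 0 i * f 0 j * v k 0.

Lemma rank_one_app f v x y :
  bl_app (rank_one f v) x y = ((f *m x) 0 0 * (f *m y) 0 0) *: v.
Proof.
apply/matrixP => k l; rewrite (ord1 l) !mxE big_distrlr /= mulr_suml.
apply: eq_bigr => i _; rewrite mulr_suml; apply: eq_bigr => j _.
by rewrite /rank_one; ring.
Qed.

(* When f(v) = 0 all products of three elements vanish, so the map is
   associative. *)
Lemma rank_one_assoc f v : f *m v = 0 -> associative_bl (rank_one f v).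
Proof.
move=> fv0 x y z; rewrite !rank_one_app.
by rewrite -!scalemxAr fv0 !mxE !mulr0 mul0r !scale0r.
Qed.

Lemma lagsum_rank_one (K Q : finType) (w : K -> Q -> C)
    (a : K -> C) (b : Q -> C) :
  (forall k q, w k q = a k * b q) -> lagsum w = 0.
Proof.
move=> w_rank1; apply: big1 => k _; apply: big1 => l _.
apply: big1 => p _; apply: big1 => q _; rewrite !w_rank1.
have -> : a k * b p * (a l * b q) - a k * b q * (a l * b p) = 0 by ring.
by rewrite mul0r.
Qed.

(* Rank-one maps with f(v) = 0 have zero defect: both families are of rank
   one and every sum_k u_k(p) z_k(q) contains the factor f(v). *)
Lemma rank_one_Fdefect f v : f *m v = 0 -> Fdefect (rank_one f v) = 0.
Proof.
move=> fv0; set mu := rank_one f v.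
have lag_u : lagsum (prod_coord mu) = 0.
  apply: (@lagsum_rank_one _ _ _ (fun k => v k 0) (fun p => f 0 p.1 * f 0 p.2)).
  by move=> k p; rewrite /prod_coord /mu /rank_one mulrC.
have factor_rank1 k q : factor_coord mu k q = f 0 k * (f 0 q.2.1 * v q.2.2 0).
  by rewrite /factor_coord /mu /rank_one; case: ifP => _; ring.
have lag_w : lagsum (factor_coordJ mu) = 0.
  apply: (@lagsum_rank_one _ _ _ (fun k => cj (f 0 k))
                                  (fun q => cj (f 0 q.2.1 * v q.2.2 0))).
  by move=> k q; rewrite /factor_coordJ factor_rank1 rmorphM.
have cross0 : \tr (gram (prod_coord mu) *m gram (factor_coordJ mu)) = 0.
  rewrite /factor_coordJ trace_gram_cross; apply: big1 => p _; apply: big1 => q _.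
  suff -> : \sum_k prod_coord mu k p * factor_coord mu k q = 0 by rewrite mul0r.
  have /matrixP/(_ 0 0) := fv0; rewrite !mxE => fv_sum0.
  transitivity (f 0 p.1 * f 0 p.2 * f 0 q.2.1 * v q.2.2 0 * \sum_k f 0 k * v k 0).
    rewrite mulr_sumr; apply: eq_bigr => k _.
    by rewrite factor_rank1 /prod_coord /mu /rank_one; ring.
  by rewrite fv_sum0 mulr0.
by rewrite /Fdefect lag_u lag_w cross0 !mulr0 !addr0.
Qed.

Lemma rank_one_neq0 f v a b c :
  rank_one f v a b c != 0 -> f 0 a != 0 /\ v c 0 != 0.
Proof. by rewrite /rank_one !mulf_eq0 !negb_or => /andP[/andP[-> _] ->]. Qed.

(* Pairwise proportionality of the factor coordinates of a nonzero mu forces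
   mu(X_i, X_j) = f_i f_j v, with f_i = mu_{a i}^c and v read off mu_{a b}. *)
Lemma factor_proportional_rank_one mu a b c :
  (forall k l q q', factor_coord mu k q * factor_coord mu l q'
                    = factor_coord mu k q' * factor_coord mu l q) ->
  mu a b c != 0 -> exists f v, mu = rank_one f v.
Proof.
move=> prop mu_abc; set m := mu a b c in mu_abc *.
have e1 i j k : mu i j k * m = mu a j c * mu i b k.
  exact: prop j b (true, (i, k)) (true, (a, c)).
have e2 i k : mu i b k * m = mu i b c * mu a b k.
  exact: prop i a (false, (b, k)) (false, (b, c)).
have e3 j : mu a j c * mu b b c = mu j b c * m.
  exact: prop j b (true, (a, c)) (false, (b, c)).
exists (\row_i mu a i c), (\col_k (mu b b c * mu a b k / m ^+ 3)).
apply: functional_extensionality => i; apply: functional_extensionality => j.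
apply: functional_extensionality => k; rewrite /rank_one !mxE.
apply: (mulIf (expf_neq0 3 mu_abc)).
transitivity (m ^+ 2 * (mu i j k * m)); first by ring.
rewrite e1; transitivity (m * mu a j c * (mu i b k * m)); first by ring.
rewrite e2; transitivity (mu a j c * mu a b k * (mu i b c * m)); first by ring.
by rewrite -e3 [in RHS]mulrA divfK ?expf_neq0 //; ring.
Qed.

(* If tr(A D) = 0 and mu = rank_one f v is nonzero, then f(v) = 0: the
   product mu(mu(X_a, X_a), X_a) is a nonzero multiple of f(v). *)
Lemma cross_eq0_orthogonal f v a c :
  \tr (gram (prod_coord (rank_one f v))
       *m gram (factor_coordJ (rank_one f v))) = 0 ->
  f 0 a != 0 -> v c 0 != 0 -> f *m v = 0.
Proof.
rewrite /factor_coordJ trace_gram_cross => /psumr2_eq0 cross0 fa_neq0 vc_neq0.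
have /normsq_eq0 := cross0 (fun p q => mulcJ_ge0 _) (a, a) (true, (a, c)).
rewrite /prod_coord /factor_coord /rank_one /=.
have -> : \sum_k f 0 a * f 0 a * v k 0 * (f 0 a * f 0 k * v c 0)
    = f 0 a ^+ 3 * v c 0 * (f *m v) 0 0.
  by rewrite mxE mulr_sumr; apply: eq_bigr => k _; ring.
move/eqP; rewrite mulf_eq0 (negbTE (mulf_neq0 (expf_neq0 3 fa_neq0) vc_neq0)) /=.
by move/eqP => fv0; apply/matrixP => i j; rewrite !ord1 fv0 mxE.
Qed.

Lemma Fdefect_eq0_rank_one mu a b c :
  Fdefect mu = 0 -> mu a b c != 0 -> exists f v, f *m v = 0 /\ mu = rank_one f v.
Proof.
move=> /eqP defect0 mu_abc.
move: defect0; rewrite /Fdefect paddr_eq0 ?addr_ge0 ?mulr_ge0 ?ler0n ?lagsum_ge0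
  ?trace_gram_cross_ge0 // paddr_eq0 ?mulr_ge0 ?ler0n ?lagsum_ge0 //.
rewrite !mulf_eq0 !pnatr_eq0 /= => /andP[/andP[_ /eqP lag_w0] /eqP cross0].
have prop k l q q' : factor_coord mu k q * factor_coord mu l q'
                     = factor_coord mu k q' * factor_coord mu l q.
  have := lagsum_eq0 lag_w0 k l q q'; rewrite /factor_coordJ -!rmorphM.
  by move/(congr1 cj); rewrite !conjcK.
have [f [v mu_rank1]] := factor_proportional_rank_one prop mu_abc.
move: mu_abc cross0; rewrite mu_rank1 => /rank_one_neq0[fa_neq0 vc_neq0] cross0.
by exists f, v; split=> //; apply: cross_eq0_orthogonal cross0 fa_neq0 vc_neq0.
Qed.
End RankOne.

Section Transport.
Variables (R : realType) (n : nat).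
Local Notation C := R[i].
Implicit Type mu : bilin R n.

Lemma sum_bilinear_change (P : 'M[C]_n) (x y : 'cV[C]_n)
    (F : 'I_n -> 'I_n -> C) :
  \sum_i \sum_j (P *m x) i 0 * (P *m y) j 0 * F i j
  = \sum_a \sum_b x a 0 * y b 0 * \sum_i \sum_j P i a * P j b * F i j.
Proof.
transitivity
  (\sum_i \sum_j \sum_a \sum_b x a 0 * y b 0 * (P i a * P j b * F i j)).
  apply: eq_bigr => i _; apply: eq_bigr => j _.
  rewrite !mxE big_distrlr /= mulr_suml.
  by apply: eq_bigr => a _; rewrite mulr_suml; apply: eq_bigr => b _; ring.
under eq_bigr do rewrite exchange_big /=.
rewrite exchange_big /=.
under eq_bigr do under eq_bigr do rewrite exchange_big /=.
under eq_bigr do rewrite exchange_big /=.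
apply: eq_bigr => a _; apply: eq_bigr => b _; rewrite mulr_sumr.
by apply: eq_bigr => i _; rewrite mulr_sumr.
Qed.

Definition bl_transport (P Q : 'M[C]_n) mu : bilin R n :=
  fun a b c => (Q *m bl_app mu (P *m basis_vec R a) (P *m basis_vec R b)) c 0.

Lemma gl_actE g mu : gl_act g mu = bl_transport (invmx g) g mu.
Proof. by []. Qed.

Lemma bl_transportE P Q mu a b c :
  bl_transport P Q mu a b c
  = \sum_l Q c l * \sum_i \sum_j P i a * P j b * mu i j l.
Proof.
rewrite /bl_transport mxE; apply: eq_bigr => l _; rewrite mxE /basis_vec -!colE.
by congr (_ * _); apply: eq_bigr => i _; apply: eq_bigr => j _; rewrite !mxE.
Qed.

Lemma bl_app_transport P Q mu x y :
  bl_app (bl_transport P Q mu) x y = Q *m bl_app mu (P *m x) (P *m y).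
Proof.
apply/matrixP => k l; rewrite (ord1 l) [LHS]mxE [RHS]mxE.
under [RHS]eq_bigr => c _ do
  rewrite mxE (sum_bilinear_change P x y (fun i j => mu i j c)).
under [LHS]eq_bigr do under eq_bigr do rewrite bl_transportE mulr_sumr.
under [LHS]eq_bigr do rewrite exchange_big /=.
rewrite exchange_big /=; apply: eq_bigr => c _; rewrite !mulr_sumr.
by apply: eq_bigr => a _; rewrite !mulr_sumr; apply: eq_bigr => b _; ring.
Qed.

Lemma bl_transport_comp P Q P' Q' mu :
  bl_transport P' Q' (bl_transport P Q mu) = bl_transport (P *m P') (Q' *m Q) mu.
Proof.
do 3 apply: functional_extensionality => ?.
by rewrite /bl_transport bl_app_transport !mulmxA.
Qed.

Lemma sum_basis_vec (a : 'I_n) (F : 'I_n -> C) :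
  \sum_i basis_vec R a i 0 * F i = F a.
Proof.
rewrite (bigD1 a) //= big1 ?addr0 => [|i neq_ia]; rewrite mxE ?eqxx ?mul1r //.
by rewrite (negbTE neq_ia) mul0r.
Qed.

Lemma bl_transport1 mu : bl_transport 1%:M 1%:M mu = mu.
Proof.
apply: functional_extensionality => a; apply: functional_extensionality => b.
apply: functional_extensionality => c; rewrite /bl_transport !mul1mx mxE.
under eq_bigr do under eq_bigr do rewrite -mulrA.
by under eq_bigr do rewrite -mulr_sumr sum_basis_vec; rewrite sum_basis_vec.
Qed.

Lemma gl_actK g mu : g \in unitmx -> gl_act (invmx g) (gl_act g mu) = mu.
Proof.
move=> g_unit.
by rewrite !gl_actE bl_transport_comp invmxK mulVmx // bl_transport1.
Qed.

Lemma bl_transport_rank_one P Q f v :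
  bl_transport P Q (rank_one f v) = rank_one (f *m P) (Q *m v).
Proof.
do 3 apply: functional_extensionality => ?.
rewrite /bl_transport rank_one_app -scalemxAr /basis_vec !mulmxA -!colE.
by rewrite /rank_one !mxE.
Qed.
End Transport.

Section NormalForm.
Variables (K : fieldType) (N : nat).

(* Sherman-Morrison: 1 + x r is invertible as soon as 1 + r x != 0. *)
Lemma rank_one_update_unit (x : 'cV[K]_N) (r : 'rV[K]_N) :
  1 + (r *m x) 0 0 != 0 -> 1%:M + x *m r \in unitmx.
Proof.
move=> rho1_neq0; set rho := (r *m x) 0 0 in rho1_neq0.
set X := x *m r; set s := (1 + rho)^-1.
have XX : X *m X = rho *: X.
  by rewrite /X mulmxA -(mulmxA x) (mx11_scalar (r *m x)) mul_mx_scalar scalemxAl.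
suff inv : (1%:M + X) *m (1%:M - s *: X) = 1%:M by case: (mulmx1_unit inv).
rewrite mulmxDl mul1mx mulmxBr mulmx1 -scalemxAr XX scalerA.
have s_inv : s * (1 + rho) = 1 by rewrite /s mulVf.
clearbody X; apply/matrixP => i j; rewrite !mxE.
transitivity ((i == j)%:R + X i j * (1 - s * (1 + rho))); first by ring.
by rewrite s_inv subrr mulr0 addr0.
Qed.

Lemma exists_separating_form (u t : 'cV[K]_N) : u != 0 -> t != 0 ->
  exists r : 'rV[K]_N, (r *m u) 0 0 = 1 /\ (r *m t) 0 0 != 0.
Proof.
move=> /cV0Pn[p up_neq0] /cV0Pn[q tq_neq0].
have form_val (c : K) (i : 'I_N) (w : 'cV[K]_N) :
    ((c *: delta_mx 0 i : 'rV[K]_N) *m w) 0 0 = c * w i 0.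
  by rewrite -scalemxAl -rowE !mxE.
have [tp_neq0|tp0] := eqVneq (t p 0) 0; last first.
  exists ((u p 0)^-1 *: delta_mx 0 p).
  by rewrite !form_val mulVf // mulf_neq0 ?invr_eq0.
exists (((1 - u q 0) / u p 0) *: delta_mx 0 p + 1 *: delta_mx 0 q).
have entryD (A B : 'M[K]_1) : (A + B) 0 0 = A 0 0 + B 0 0 by rewrite mxE.
rewrite !mulmxDl !entryD !form_val tp_neq0 mulr0 !mul1r add0r divfK //.
by split=> //; rewrite subrK.
Qed.

Lemma exists_transvection (u t : 'cV[K]_N) : u != 0 -> t != 0 ->
  exists E : 'M[K]_N, [/\ E \in unitmx, E *m u = t &
    forall k, u k 0 = t k 0 -> row k E = row k 1%:M].
Proof.
move=> u_neq0 t_neq0.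
have [r [ru1 rt_neq0]] := exists_separating_form u_neq0 t_neq0.
exists (1%:M + (t - u) *m r); split.
- apply: rank_one_update_unit.
  have -> : (r *m (t - u)) 0 0 = (r *m t) 0 0 - (r *m u) 0 0.
    by rewrite mulmxBr !mxE.
  by rewrite ru1 addrC subrK.
- by rewrite mulmxDl mul1mx -mulmxA (mx11_scalar (r *m u)) ru1 mulmx1 addrC subrK.
- move=> k ukt; rewrite linearD /= row_mul.
  suff -> : row k (t - u) = 0 by rewrite mul0mx addr0.
  by apply/rowP => j; rewrite (ord1 j) !mxE ukt subrr.
Qed.

Lemma null_pair_normal_form (f : 'rV[K]_N) (v : 'cV[K]_N) (i0 i1 : 'I_N) :
  i0 != i1 -> f != 0 -> v != 0 -> f *m v = 0 ->
  exists g, [/\ g \in unitmx, row i0 g = f & g *m v = delta_mx i1 0].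
Proof.
move=> i01 f_neq0 v_neq0 fv0.
have fT_neq0 : f^T != 0 by rewrite -(inj_eq (@trmx_inj _ _ _)) trmxK trmx0.
have e0_neq0 : delta_mx i0 0 != 0 :> 'cV[K]_N.
  by apply/cV0Pn; exists i0; rewrite mxE !eqxx oner_neq0.
have [E1 [E1_unit E1e0 _]] := exists_transvection e0_neq0 fT_neq0.
set Q := E1^T.
have Q_unit : Q \in unitmx by rewrite unitmx_tr.
have Q0 : row i0 Q = f by rewrite -tr_col colE E1e0 trmxK.
set u := Q *m v.
have u_neq0 : u != 0.
  by apply: contraNneq v_neq0 => u0; rewrite -(mulKmx Q_unit v) -/u u0 mulmx0.
have e1_neq0 : delta_mx i1 0 != 0 :> 'cV[K]_N.
  by apply/cV0Pn; exists i1; rewrite mxE !eqxx oner_neq0.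
have [E2 [E2_unit E2u E2_row0]] := exists_transvection u_neq0 e1_neq0.
exists (E2 *m Q); split.
- by rewrite unitmx_mul E2_unit Q_unit.
- rewrite row_mul E2_row0 -?row_mul ?mul1mx // [RHS]mxE (negbTE i01).
  have -> : u i0 0 = (row i0 u) 0 0 by rewrite [RHS]mxE.
  by rewrite row_mul Q0 fv0 mxE.
- by rewrite -mulmxA.
Qed.
End NormalForm.

Section CommutativeNilpotent.
Variables (R : realType) (m : nat).
Local Notation C := R[i].

(* The index of the basis vector X_2 (X_1 has index ord0). *)
Definition ord_one : 'I_m.+2 := Ordinal (isT : (1 < m.+2)%N).

Lemma mu_ca_rank_one :
  @mu_ca R m.+2 = rank_one (delta_mx 0 ord0) (delta_mx ord_one 0).
Proof.
apply: functional_extensionality => i; apply: functional_extensionality => j.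
apply: functional_extensionality => k.
rewrite /mu_ca /rank_one !mxE !eqxx /= -!val_eqE /=.
by case: (i == 0 :> nat); case: (j == 0 :> nat); case: (k == 1 :> nat);
  rewrite /= ?mulr1 ?mulr0.
Qed.

Lemma mu_ca_in_An : in_An (@mu_ca R m.+2).
Proof.
split.
  by rewrite mu_ca_rank_one; apply: rank_one_assoc; rewrite mul_delta_mx_0.
by exists ord0, ord0, ord_one; rewrite /mu_ca /=; apply/eqP; rewrite oner_eq0.
Qed.

Lemma rank_one_iso_ca (f : 'rV[C]_m.+2) (v : 'cV[C]_m.+2) :
  f != 0 -> v != 0 -> f *m v = 0 -> isomorphic_bl (rank_one f v) (@mu_ca R m.+2).
Proof.
move=> f_neq0 v_neq0 fv0.
have [g [g_unit g_row g_v]] :=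
  null_pair_normal_form (isT : ord0 != ord_one) f_neq0 v_neq0 fv0.
exists g; split=> //.
by rewrite gl_actE bl_transport_rank_one mu_ca_rank_one g_v -g_row -row_mul
  mulmxV // row1.
Qed.

Lemma iso_ca_rank_one (mu : bilin R m.+2) : isomorphic_bl mu (@mu_ca R m.+2) ->
  exists f v, f *m v = 0 /\ mu = rank_one f v.
Proof.
move=> [g [g_unit g_mu]].
exists (delta_mx 0 ord0 *m g), (invmx g *m delta_mx ord_one 0); split.
  by rewrite mulmxA -(mulmxA _ g) mulmxV // mulmx1 mul_delta_mx_0.
transitivity (gl_act (invmx g) (gl_act g mu)); first by rewrite gl_actK.
by rewrite g_mu mu_ca_rank_one gl_actE invmxK bl_transport_rank_one.
Qed.

Lemma Fn_mu_ca : Fn (@mu_ca R m.+2) = 20%:R.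
Proof.
have /bl_norm2_neq0 norm_neq0 : @mu_ca R m.+2 ord0 ord0 ord_one != 0.
  by rewrite /mu_ca /= oner_eq0.
apply/(Fn_eq20 norm_neq0); rewrite mu_ca_rank_one.
by apply: rank_one_Fdefect; rewrite mul_delta_mx_0.
Qed.

Lemma Fn_eq20_iso_ca (mu : bilin R m.+2) a b c :
  mu a b c != 0 -> Fn mu = 20%:R <-> isomorphic_bl mu (@mu_ca R m.+2).
Proof.
move=> mu_abc; rewrite (Fn_eq20 (bl_norm2_neq0 mu_abc)); split.
  move=> /Fdefect_eq0_rank_one /(_ mu_abc) [f [v [fv0 mu_rank1]]].
  move: mu_abc; rewrite mu_rank1 => /rank_one_neq0[fa_neq0 vc_neq0].
  apply: rank_one_iso_ca fv0; first by apply/rV0Pn; exists a.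
  by apply/cV0Pn; exists c.
by move=> /iso_ca_rank_one [f [v [fv0 ->]]]; apply: rank_one_Fdefect.
Qed.
End CommutativeNilpotent.

Theorem theorem4p9 (R : realType) (n : nat) (hn : (3 <= n)%N)
  (mu : bilin R n) (hmu : in_An mu) :
  (is_max_An mu <-> isomorphic_bl mu (@mu_ca R n)) /\
  (is_max_An mu -> Fn mu = 20%:R).
Proof.
case: n hn mu hmu => [|[|m]] // _ mu [_ [a [b [c /eqP mu_abc]]]].
have max_iff : is_max_An mu <-> Fn mu = 20%:R.
  split=> [mu_max|F20 nu _]; last by rewrite F20 Fn_le20.
  apply/eqP; rewrite eq_le Fn_le20 /= -(@Fn_mu_ca R m).
  by apply: mu_max; apply: mu_ca_in_An.
split; last by case: max_iff.
exact: iff_trans max_iff (Fn_eq20_iso_ca mu_abc).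
Qed.
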